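(* Let $A$ be a commutative ring and let $(x_0,\ldots,x_n)$ be a path in $Y(A)$. Let $X\in\mathrm{SL}_2(A)$ with $\infty\cdot X=x_0$ and let $Y\in\mathrm{SL}_2(A)$ be such that $Z:=XY^{-1}\in B$, say $Z=\begin{pmatrix}u&0\\c&u^{-1}\end{pmatrix}$. Let $a_1,\ldots,a_n\in A$ be the elements with $x_i=\infty\cdot E(a_i)\cdots E(a_1)X$ for $1\le i\le n$, and let $b_1,\ldots,b_n\in A$ be the elements with $x_i=\infty\cdot E(b_i)\cdots E(b_1)Y$ for $1\le i\le n$. Then $b_1=u^2a_1+cu$ and $b_i=u^{2(-1)^{i-1}}a_i$ for all $i\ge2$.
   Context: A unimodular row over $A$ is $(a,b)\in A^2$ with $aA+bA=A$. $\Gamma(A)$ is the graph whose vertices are classes of unimodular rows modulo multiplication by units, with $\{[u],[v]\}$ an edge iff the matrix with rows $u,v$ lies in $\mathrm{GL}_2(A)$; $Y(A)$ is its clique complex, and a path is a sequence of vertices with consecutive ones adjacent. $\mathrm{SL}_2(A)$ acts on vertices on the right by $[u]\cdot M=[uM]$; $\infty=[(1,0)]$. $E(a)=\begin{pmatrix}a&1\\-1&0\end{pmatrix}$. $B$ is the group of lower triangular matrices in $\mathrm{SL}_2(A)$. (For a path and a matrix $X$ with $\infty\cdot X=x_0$, the elements $a_i$ with $x_i=\infty\cdot E(a_i)\cdots E(a_1)X$ exist and are unique.) *)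

From HB Require Import structures.
From mathcomp Require Import all_boot all_order all_algebra.
Set Implicit Arguments. Unset Strict Implicit. Unset Printing Implicit Defensive.
Import Order.TTheory GRing.Theory Num.Theory.
Local Open Scope ring_scope.

Section Defs.
Variable A : comUnitRingType.

Definition mx2 (p q r s : A) : 'M[A]_2 :=
  \matrix_(i < 2, j < 2)
    if i == 0 then (if j == 0 then p else q) else (if j == 0 then r else s).

Definition rv2 (a b : A) : 'rV[A]_2 := \row_(j < 2) if j == 0 then a else b.

Definition rows2 (u v : 'rV[A]_2) : 'M[A]_2 :=
  \matrix_(i < 2, j < 2) if i == 0 then u 0 j else v 0 j.

Definition unimodular (v : 'rV[A]_2) : Prop :=
  exists s t : A, v 0 0 * s + v 0 1 * t = 1.

(* [u] = [v] as vertices: equal modulo multiplication by a unit *)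
Definition same_vertex (u v : 'rV[A]_2) : Prop :=
  exists2 l : A, l \is a GRing.unit & v = l *: u.

(* edge of Gamma(A): the matrix with rows u, v lies in GL_2(A) *)
Definition adjacent (u v : 'rV[A]_2) : Prop := rows2 u v \in unitmx.

(* (x_0, ..., x_n) is a path in Y(A) (vertices given by representatives) *)
Definition is_path (n : nat) (x : nat -> 'rV[A]_2) : Prop :=
  (forall i, (i <= n)%N -> unimodular (x i)) /\
  (forall i, (i < n)%N -> adjacent (x i) (x i.+1)).

Definition inSL2 (M : 'M[A]_2) : Prop := \det M = 1.

Definition inB (M : 'M[A]_2) : Prop := M 0 1 = 0 /\ inSL2 M.

Definition infty : 'rV[A]_2 := rv2 1 0.

Definition act (u : 'rV[A]_2) (M : 'M[A]_2) : 'rV[A]_2 := u *m M.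

Definition Emx (a : A) : 'M[A]_2 := mx2 a 1 (-1) 0.

Fixpoint Eprod (a : nat -> A) (i : nat) : 'M[A]_2 :=
  match i with
  | O => 1%:M
  | S k => Emx (a k.+1) *m Eprod a k
  end.

End Defs.

(** The identity [E(a) L(d, e) = L(d^-1, 0) E(d^2 a + d e)] for the lower
    triangular matrices [L(d, e) = [[d, 0], [e, d^-1]]] lets one move the
    lower triangular factor [Z = X Y^-1 = L(u, c)] past [E(a_1)], then past
    [E(a_2)], and so on: after [i] steps
    [E(a_i)...E(a_1) X = L(d_i, e_i) E(b'_i)...E(b'_1) Y] with
    [b'_(i+1) = d_i^2 a_(i+1) + d_i e_i], [d_i = u^((-1)^i)], [e_0 = c] and
    [e_i = 0] for [i > 0].  Since [L(d, e)] fixes [infty] up to the unit [d],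
    both sides define the vertex [x_i]; as [infty E(b) Q = (b, 1) Q] with [Q]
    invertible, this vertex determines [b], so [b_i = b'_i]. *)
From HB Require Import structures.
From mathcomp Require Import all_boot all_order all_algebra.
From mathcomp Require Import ring.
Set Implicit Arguments.
Unset Strict Implicit.
Unset Printing Implicit Defensive.
Import Order.TTheory GRing.Theory Num.Theory.
Local Open Scope ring_scope.

Section TwoByTwo.
Variable A : comUnitRingType.
Implicit Types (p q r s d e al be l : A) (Q M : 'M[A]_2).

Definition lower_mx d e : 'M[A]_2 := mx2 d 0 e d^-1.

Lemma mx2_mul (p q r s p' q' r' s' : A) : mx2 p q r s *m mx2 p' q' r' s' =
  mx2 (p * p' + q * r') (p * q' + q * s') (r * p' + s * r') (r * q' + s * s').
Proof.
apply/matrixP => i j; rewrite !mxE !big_ord_recl big_ord0 !mxE addr0.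
by case: i => [[|[|//]] ?]; case: j => [[|[|//]] ?]; rewrite /= ?mxE /=.
Qed.

Lemma det_mx2 p q r s : \det (mx2 p q r s) = p * s - q * r.
Proof.
rewrite (expand_det_row _ 0) !big_ord_recl big_ord0 /cofactor !det_mx11 !mxE /=.
by rewrite !expr0 !mul1r expr1 addr0; ring.
Qed.

Lemma rv2_mul al be p q r s :
  rv2 al be *m mx2 p q r s = rv2 (al * p + be * r) (al * q + be * s).
Proof.
apply/matrixP => i j; rewrite !mxE !big_ord_recl big_ord0 !mxE addr0.
by case: j => [[|[|//]] ?]; rewrite /= ?mxE /=.
Qed.

Lemma rv2Z l al be : l *: rv2 al be = rv2 (l * al) (l * be).
Proof. by apply/matrixP => i j; rewrite !mxE; case: (j == 0). Qed.

Lemma rv2_inj al be al' be' : rv2 al be = rv2 al' be' -> al = al' /\ be = be'.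
Proof. by move=> /matrixP eq_rv; move: (eq_rv 0 0) (eq_rv 0 1); rewrite !mxE. Qed.

Lemma det_Emx al : \det (Emx al) = 1.
Proof. by rewrite det_mx2 mulr0 mulrN1 opprK add0r. Qed.

Lemma det_Eprod (a : nat -> A) i : \det (Eprod a i) = 1.
Proof. by elim: i => [|i IH] /=; rewrite ?det1 // det_mulmx det_Emx IH mulr1. Qed.

Lemma Emx_lower_mx d e al : d \is a GRing.unit ->
  Emx al *m lower_mx d e = lower_mx d^-1 0 *m Emx (d ^+ 2 * al + d * e).
Proof.
move=> d_unit; rewrite /Emx /lower_mx invrK !mx2_mul.
have -> : d ^+ 2 * al + d * e = d * (d * al + e) by ring.
by rewrite mulKr //; congr mx2; ring.
Qed.

Lemma act_infty_lower_mx d e M :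
  act (infty A) (lower_mx d e *m M) = d *: act (infty A) M.
Proof.
by rewrite /act mulmxA scalemxAl rv2_mul rv2Z !mul1r !mul0r !mulr0 !addr0 mulr1.
Qed.

Lemma act_infty_Emx al M : act (infty A) (Emx al *m M) = rv2 al 1 *m M.
Proof.
by rewrite /act mulmxA rv2_mul !mul1r !mul0r !addr0.
Qed.

Lemma same_vertex_sym (v w : 'rV[A]_2) : same_vertex v w -> same_vertex w v.
Proof.
by move=> [l l_unit ->]; exists l^-1; rewrite ?unitrV ?scalerA ?mulVr ?scale1r.
Qed.

Lemma same_vertex_trans (v w z : 'rV[A]_2) :
  same_vertex v w -> same_vertex w z -> same_vertex v z.
Proof.
move=> [l l_unit ->] [l' l'_unit ->].
by exists (l' * l); rewrite ?unitrM ?l_unit ?l'_unit ?scalerA.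
Qed.

Lemma same_vertex_Emx_inj Q al be : Q \in unitmx ->
  same_vertex (act (infty A) (Emx al *m Q)) (act (infty A) (Emx be *m Q)) ->
  al = be.
Proof.
move=> Q_unit [l _]; rewrite !act_infty_Emx => eq_rows.
have : rv2 be 1 = l *: rv2 al 1.
  by rewrite -(mulmxK Q_unit (rv2 be 1)) eq_rows -scalemxAl mulmxK.
by rewrite rv2Z mulr1 => /rv2_inj [-> <-]; rewrite mul1r.
Qed.

Lemma Emx_lower_mx_vertex Q d e al be (y : 'rV[A]_2) :
  Q \in unitmx -> d \is a GRing.unit ->
  same_vertex (act (infty A) (Emx al *m (lower_mx d e *m Q))) y ->
  same_vertex (act (infty A) (Emx be *m Q)) y ->
  be = d ^+ 2 * al + d * e.
Proof.
move=> Q_unit d_unit y_al y_be; apply: (same_vertex_Emx_inj Q_unit).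
apply: same_vertex_trans y_be (same_vertex_trans (same_vertex_sym y_al) _).
rewrite mulmxA Emx_lower_mx // -mulmxA act_infty_lower_mx.
by exists d; rewrite ?scalerA ?mulrV ?scale1r.
Qed.

End TwoByTwo.

Section ChangeOfFrame.
Variables (A : comUnitRingType) (n : nat) (x : nat -> 'rV[A]_2).
Variables (X Y : 'M[A]_2) (u c : A) (a b : nat -> A).
Hypothesis det_Y : \det Y = 1.
Hypothesis u_unit : u \is a GRing.unit.
Hypothesis X_frame : X = lower_mx u c *m Y.
Hypothesis a_path :
  forall i, (1 <= i <= n)%N -> same_vertex (act (infty A) (Eprod a i *m X)) (x i).
Hypothesis b_path :
  forall i, (1 <= i <= n)%N -> same_vertex (act (infty A) (Eprod b i *m Y)) (x i).

Let d i : A := u ^ ((-1) ^+ i : int).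
Let e i : A := if i is 0 then c else 0.
Let frames_related i :=
  Eprod a i *m X = lower_mx (d i) (e i) *m (Eprod b i *m Y).

Let d_unit i : d i \is a GRing.unit.
Proof. by rewrite unitr_n0expz ?signr_eq0. Qed.

Let Eprod_Y_unit i : Eprod b i *m Y \in unitmx.
Proof. by rewrite unitmxE det_mulmx det_Eprod det_Y mulr1 unitr1. Qed.

Lemma b_succ_of_frames i : (i < n)%N -> frames_related i ->
  b i.+1 = d i ^+ 2 * a i.+1 + d i * e i.
Proof.
move=> lt_i_n frames_i; have range : (1 <= i.+1 <= n)%N by [].
have x_a := a_path range; have x_b := b_path range.
rewrite /= -mulmxA frames_i in x_a; rewrite /= -mulmxA in x_b.
exact: Emx_lower_mx_vertex (Eprod_Y_unit i) (d_unit i) x_a x_b.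
Qed.

Lemma frames_related_succ i : (i < n)%N -> frames_related i -> frames_related i.+1.
Proof.
move=> lt_i_n frames_i; rewrite /frames_related /= -!mulmxA frames_i mulmxA.
rewrite Emx_lower_mx // -(b_succ_of_frames lt_i_n frames_i) -!mulmxA.
by rewrite /d exprS mulN1r -invr_expz.
Qed.

Lemma frames_related_le i : (i <= n)%N -> frames_related i.
Proof.
elim: i => [_|i IH lt_i_n]; first by rewrite /frames_related mul1mx mul1mx X_frame.
by apply: frames_related_succ lt_i_n (IH (ltnW lt_i_n)).
Qed.

Lemma b_succ i : (i < n)%N -> b i.+1 = d i ^+ 2 * a i.+1 + d i * e i.
Proof.
by move=> lt_i_n; apply: b_succ_of_frames lt_i_n (frames_related_le (ltnW lt_i_n)).
Qed.

End ChangeOfFrame.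

Theorem proposition5p1 (A : comUnitRingType) (n : nat) (x : nat -> 'rV[A]_2)
  (X Y : 'M[A]_2) (u c : A) (a b : nat -> A) :
  is_path n x ->
  inSL2 X -> same_vertex (act (infty A) X) (x 0%N) ->
  inSL2 Y ->
  inB (X *m invmx Y) ->
  X *m invmx Y = mx2 u 0 c u^-1 ->
  (forall i, (1 <= i <= n)%N -> same_vertex (act (infty A) (Eprod a i *m X)) (x i)) ->
  (forall i, (1 <= i <= n)%N -> same_vertex (act (infty A) (Eprod b i *m Y)) (x i)) ->
  (1 <= n)%N ->
  b 1%N = u ^+ 2 * a 1%N + c * u /\
  (forall i, (2 <= i <= n)%N -> b i = u ^ (2%:Z * (-1) ^+ i.-1) * a i).
Proof.
(* The path and the conditions on X only guarantee that the a_i, b_i exist. *)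
move=> _ _ _ det_Y [_ det_Z] Z_def a_path b_path n_gt0.
have Y_unit : Y \in unitmx by rewrite unitmxE det_Y unitr1.
have X_frame : X = lower_mx u c *m Y by rewrite /lower_mx -Z_def mulmxKV.
have u_unit : u \is a GRing.unit.
  by apply/unitrPr; exists u^-1; rewrite -det_Z Z_def det_mx2 mul0r subr0.
have b_rec := b_succ det_Y u_unit X_frame a_path b_path.
split; first by rewrite b_rec // expr0 expr1z [u * c]mulrC.
case=> [|[|i]] // /andP [_ lt_i_n]; rewrite b_rec //= mulr0 addr0.
by rewrite [2%:Z * _]mulrC -exprz_exp.
Qed.
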